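(* Let $n\ge 2$ and $1\le k\le n-1$. Suppose $F$ is absolutely continuous, $h$ is continuous on $[l_F,r_F]$, and $h^{(k)}$ is continuous on $(l_F,r_F)$. Assume that for every $v\in(l_F,r_F)$ the quantity ${}_0M_k(l_F,v)=\frac{\partial^k}{\partial v^k}\frac{h(v)-h(l_F)}{v-l_F}$ is nonzero. Then \[ E[h^{(k)}(X(n))\mid X(n-k)=u,\ X(n+1)=v]=k\,{}_0M_{k-1}(u,v)\qquad\text{for all } l_F<u<v<r_F \] holds if and only if $l_F>-\infty$, $r_F=\infty$ and $F(x)=1-e^{-c(x-l_F)}$ for $x\ge l_F$, for some constant $c>0$.
   Context: $X_1,X_2,\dots$ are i.i.d. copies of a random variable $X$ with distribution function $F$; $l_F=\inf\{x:F(x)>0\}$, $r_F=\sup\{x:F(x)<1\}$. Upper record times: $L(1)=1$, $L(m)=\min\{j>L(m-1): X_j>X_{L(m-1)}\}$; upper record values $X(m)=X_{L(m)}$. Let $R(x)=-\ln(1-F(x))$. Conditional expectations given $X(n-k)=u$, $X(n+r)=v$ ($1\le k\le n-1$, $r\ge1$, $u<v$) are taken with respect to the conditional density of $X(n)$ \[ t\mapsto \frac{(k+r-1)!}{(k-1)!(r-1)!}\Big[\tfrac{R(t)-R(u)}{R(v)-R(u)}\Big]^{k-1}\Big[\tfrac{R(v)-R(t)}{R(v)-R(u)}\Big]^{r-1}\frac{R'(t)}{R(v)-R(u)},\quad u<t<v. \] For a function $h$ set $M(u,v)=\frac{h(v)-h(u)}{v-u}$ ($u\ne v$) and ${}_iM_j(u,v)=\frac{\partial^{i+j}}{\partial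 u^i\partial v^j}M(u,v)$; ${}_iM={}_iM_0$, $M_j={}_0M_j$. *)

From Stdlib Require Import Reals Lra Lia Factorial.
Open Scope R_scope.

Fixpoint sumN (f : nat -> R) (N : nat) : R :=
  match N with
  | O => 0
  | S m => sumN f m + f m
  end.

Definition is_cdf (F : R -> R) : Prop :=
  (forall x y, x <= y -> F x <= F y) /\
  (forall x eps, 0 < eps -> exists d, 0 < d /\
      forall y, x <= y < x + d -> Rabs (F y - F x) < eps) /\
  (forall eps, 0 < eps -> exists M, forall x, x < M -> F x < eps) /\
  (forall eps, 0 < eps -> exists M, forall x, M < x -> 1 - eps < F x).

Definition abs_continuous (F : R -> R) : Prop :=
  forall eps, 0 < eps -> exists delta, 0 < delta /\
    forall (N : nat) (a b : nat -> R),
      (forall i, (i < N)%nat -> a i <= b i) ->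
      (forall i, (S i < N)%nat -> b i <= a (S i)) ->
      sumN (fun i => b i - a i) N < delta ->
      sumN (fun i => Rabs (F (b i) - F (a i))) N < eps.

(* l = l_F = inf {x : F x > 0}  (in particular l_F is finite) *)
Definition is_lF (F : R -> R) (l : R) : Prop :=
  (forall x, 0 < F x -> l <= x) /\
  (forall y, (forall x, 0 < F x -> y <= x) -> y <= l).

(* x < r_F = sup {x : F x < 1} *)
Definition below_rF (F : R -> R) (x : R) : Prop :=
  exists y, x < y /\ F y < 1.

(* x <= r_F *)
Definition le_rF (F : R -> R) (x : R) : Prop :=
  forall z, z < x -> exists y, z < y /\ F y < 1.

Definition rF_infinite (F : R -> R) : Prop :=
  forall M, exists y, M < y /\ F y < 1.

Definition in_open (F : R -> R) (l x : R) : Prop := l < x /\ below_rF F x.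
Definition in_closed (F : R -> R) (l x : R) : Prop := l <= x /\ le_rF F x.

Definition deriv_chain (D : R -> Prop) (f : R -> R) (n : nat) (g : nat -> R -> R) : Prop :=
  (forall x, D x -> g O x = f x) /\
  (forall j x, (j < n)%nat -> D x -> derivable_pt_lim (g j) x (g (S j) x)).

Definition RS_integral (g alpha : R -> R) (a b I : R) : Prop :=
  forall eps, 0 < eps -> exists delta, 0 < delta /\
    forall (N : nat) (x xi : nat -> R),
      x O = a -> x N = b ->
      (forall i, (i < N)%nat -> x i <= xi i <= x (S i)) ->
      (forall i, (i < N)%nat -> x (S i) - x i < delta) ->
      Rabs (sumN (fun i => g (xi i) * (alpha (x (S i)) - alpha (x i))) N - I) < eps.

Definition Rfun (F : R -> R) (x : R) : R := - ln (1 - F x).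

(* the conditional density of X(n) given X(n-k)=u, X(n+r)=v, without the factor R'(t) *)
Definition cond_weight (F : R -> R) (k r : nat) (u v t : R) : R :=
  INR (fact (k + r - 1)) / (INR (fact (k - 1)) * INR (fact (r - 1))) *
  ((Rfun F t - Rfun F u) / (Rfun F v - Rfun F u)) ^ (k - 1) *
  ((Rfun F v - Rfun F t) / (Rfun F v - Rfun F u)) ^ (r - 1) *
  / (Rfun F v - Rfun F u).

(* E[g(X(n)) | X(n-k)=u, X(n+r)=v] = I, i.e.
   int_u^v g(t) * weight(t) R'(t) dt = I, written as a Riemann-Stieltjes integral dR(t)
   (R is absolutely continuous on [u,v]). *)
Definition cond_exp (F g : R -> R) (k r : nat) (u v I : R) : Prop :=
  RS_integral (fun t => g t * cond_weight F k r u v t) (Rfun F) u v I.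

(* Write R = -ln(1 - F) for the cumulative hazard.  Given X(n-k) = u, X(n+1) = v, the
   conditional law of X(n) has weight k (R t - R u)^(k-1) / (R v - R u)^k with respect to
   dR(t) on (u, v).  The j-th derivative of the divided difference t |-> (h t - h u)/(t - u)
   is dd_numer_j(t) / (t - u)^(j+1), where dd_numer_j is an explicit expression in the
   derivatives of h with d/dt dd_numer_j(t) = (t - u)^j h^(j+1)(t).

   Sufficiency: when R(t) = c (t - l) the weight is k (t - u)^(k-1) / (v - u)^k dt, and the
   fundamental theorem of calculus (for Riemann-Stieltjes sums against an affine
   integrator) gives the value k dd_numer_(k-1)(v) / (v - u)^k.

   Necessity: the identity says int_u^w h^(k) (R - R u)^(k-1) dR = A(w) (R w - R u)^k with
   A the (k-1)-th derivative of the divided difference.  The left side is differentiable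
   with respect to R in w; expanding the right side with the little-o calculus of
   [negligible] shows that R is differentiable at v with R'(v) = (R v - R u)/(v - u) as
   soon as A'(v) <> 0, which holds for u near l by the hypothesis on 0M_k.  So R is affine
   near l with a slope independent of v; since R(l+) = 0, R(x) = c (x - l) on (l, r_F),
   F is exponential there, and r_F = +infinity. *)

From Stdlib Require Import Reals Lra Lia Factorial Classical.
Open Scope R_scope.

Lemma Rabs_le_bounds x a : Rabs x <= a -> - a <= x <= a.
Proof. unfold Rabs; destruct (Rcase_abs x); intros; lra. Qed.

Lemma sumN_ext f g N : (forall i, (i < N)%nat -> f i = g i) -> sumN f N = sumN g N.
Proof. induction N as [|N IH]; simpl; intros H; auto. rewrite IH, H; auto. Qed.

Lemma sumN_scal c f N : sumN (fun i => c * f i) N = c * sumN f N.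
Proof. induction N as [|N IH]; simpl; [ring | rewrite IH; ring]. Qed.

Lemma sumN_minus f g N : sumN (fun i => f i - g i) N = sumN f N - sumN g N.
Proof. induction N as [|N IH]; simpl; [ring | rewrite IH; ring]. Qed.

Lemma sumN_tele g N : sumN (fun i => g (S i) - g i) N = g N - g O.
Proof. induction N as [|N IH]; simpl; [ring | rewrite IH; ring]. Qed.

Lemma sumN_split f N M : sumN f (N + M) = sumN f N + sumN (fun i => f (N + i)%nat) M.
Proof.
  induction M as [|M IH]; simpl.
  - rewrite Nat.add_0_r; ring.
  - rewrite Nat.add_succ_r; simpl; rewrite IH; ring.
Qed.

Lemma sumN_le f g N : (forall i, (i < N)%nat -> f i <= g i) -> sumN f N <= sumN g N.
Proof.
  induction N as [|N IH]; simpl; intros H; [lra|].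
  assert (f N <= g N) by auto. assert (sumN f N <= sumN g N) by auto. lra.
Qed.

Lemma sumN_abs f N : Rabs (sumN f N) <= sumN (fun i => Rabs (f i)) N.
Proof.
  induction N as [|N IH]; simpl.
  - rewrite Rabs_R0; lra.
  - eapply Rle_trans; [apply Rabs_triang | lra].
Qed.

Lemma partition_bounds (x : nat -> R) N : (forall i, (i < N)%nat -> x i <= x (S i)) ->
  forall i, (i <= N)%nat -> x O <= x i <= x N.
Proof.
  intros Hmon. assert (Hlo : forall i, (i <= N)%nat -> x O <= x i).
  { induction i as [|i IH]; intros Hi; [lra|]. specialize (Hmon i ltac:(lia)). specialize (IH ltac:(lia)). lra. }
  assert (Hhi : forall m, (m <= N)%nat -> x (N - m)%nat <= x N).
  { induction m as [|m IH]; intros Hm; [rewrite Nat.sub_0_r; lra|].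
    specialize (IH ltac:(lia)). specialize (Hmon (N - S m)%nat ltac:(lia)).
    replace (S (N - S m)) with (N - m)%nat in Hmon by lia. lra. }
  intros i Hi. split; [auto|].
  pose proof (Hhi (N - i)%nat ltac:(lia)) as H. replace (N - (N - i))%nat with i in H by lia. exact H.
Qed.

Definition RS_sum (f al : R -> R) (x : nat -> R) (N : nat) : R :=
  sumN (fun i => f (x i) * (al (x (S i)) - al (x i))) N.

Lemma RS_sum_deviation f al (x : nat -> R) N a b c w :
  x O = a -> x N = b -> (forall i, (i < N)%nat -> x i <= x (S i)) ->
  (forall t, a <= t <= b -> Rabs (f t - c) <= w) ->
  (forall s t, a <= s -> s <= t -> t <= b -> al s <= al t) ->
  Rabs (RS_sum f al x N - c * (al b - al a)) <= w * (al b - al a).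
Proof.
  intros Hx0 HxN Hmon Hw Hal.
  pose proof (partition_bounds x N Hmon) as Hin. rewrite Hx0, HxN in Hin.
  assert (Htel : al b - al a = sumN (fun i => al (x (S i)) - al (x i)) N)
    by (rewrite (sumN_tele (fun i => al (x i))), Hx0, HxN; reflexivity).
  rewrite Htel, <- !sumN_scal. unfold RS_sum. rewrite <- sumN_minus.
  eapply Rle_trans; [apply sumN_abs|]. apply sumN_le. intros i Hi.
  pose proof (Hin i ltac:(lia)). pose proof (Hin (S i) ltac:(lia)). pose proof (Hmon i Hi).
  assert (Hinc : 0 <= al (x (S i)) - al (x i)) by (assert (al (x i) <= al (x (S i))) by (apply Hal; lra); lra).
  replace (f (x i) * (al (x (S i)) - al (x i)) - c * (al (x (S i)) - al (x i)))
    with ((f (x i) - c) * (al (x (S i)) - al (x i))) by ring.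
  rewrite Rabs_mult, (Rabs_right (al (x (S i)) - al (x i))) by lra.
  apply Rmult_le_compat_r; [lra | apply Hw; lra].
Qed.

Definition unif_part (a b : R) (N : nat) (i : nat) : R := a + INR i * ((b - a) / INR N).

Lemma unif_part_0 a b N : unif_part a b N O = a.
Proof. unfold unif_part; simpl; ring. Qed.

Lemma unif_part_N a b N : (0 < N)%nat -> unif_part a b N N = b.
Proof. intros HN. assert (0 < INR N) by (apply lt_0_INR; lia). unfold unif_part; field; lra. Qed.

Lemma unif_part_step a b N i : unif_part a b N (S i) - unif_part a b N i = (b - a) / INR N.
Proof. unfold unif_part; rewrite S_INR; ring. Qed.

Definition concat_part (x y : nat -> R) (N : nat) (i : nat) : R :=
  if (i <=? N)%nat then x i else y (i - N)%nat.

Lemma concat_part_left x y N i : (i <= N)%nat -> concat_part x y N i = x i.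
Proof. intros Hi; unfold concat_part. destruct (Nat.leb_spec i N); [reflexivity | lia]. Qed.

Lemma concat_part_right x y N j : x N = y O -> concat_part x y N (N + j) = y j.
Proof.
  intros Hxy; unfold concat_part. destruct (Nat.leb_spec (N + j) N).
  - replace j with O by lia. rewrite Nat.add_0_r. exact Hxy.
  - f_equal; lia.
Qed.

Lemma concat_part_cells (P : R -> R -> Prop) x y N M : x N = y O ->
  (forall j, (j < N)%nat -> P (x j) (x (S j))) -> (forall j, (j < M)%nat -> P (y j) (y (S j))) ->
  forall i, (i < N + M)%nat -> P (concat_part x y N i) (concat_part x y N (S i)).
Proof.
  intros Hxy Hx Hy i Hi. destruct (Nat.lt_ge_cases i N).
  - rewrite !concat_part_left by lia. auto.
  - replace i with (N + (i - N))%nat by lia. replace (S (N + (i - N))) with (N + S (i - N))%nat by lia.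
    rewrite !concat_part_right by exact Hxy. apply Hy; lia.
Qed.

Lemma RS_sum_concat f al x y N M : x N = y O ->
  RS_sum f al (concat_part x y N) (N + M) = RS_sum f al x N + RS_sum f al y M.
Proof.
  intros Hxy. unfold RS_sum. rewrite sumN_split. f_equal.
  - apply sumN_ext; intros i Hi. rewrite !concat_part_left by lia. reflexivity.
  - apply sumN_ext; intros i Hi. replace (S (N + i)) with (N + S i)%nat by lia.
    rewrite !concat_part_right by exact Hxy. reflexivity.
Qed.

Lemma uniform_mesh_small L d : 0 < d -> exists N, (0 < N)%nat /\ 0 < INR N /\ L / INR N < d.
Proof.
  intros Hd. destruct (INR_unbounded (L / d)) as [N0 HN0]. exists (S N0).
  assert (HNpos : 0 < INR (S N0)) by (apply lt_0_INR; lia). split; [lia | split; [exact HNpos|]].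
  apply Rmult_lt_reg_r with (INR (S N0) / d); [apply Rdiv_lt_0_compat; lra|].
  replace (L / INR (S N0) * (INR (S N0) / d)) with (L / d) by (field; lra).
  replace (d * (INR (S N0) / d)) with (INR (S N0)) by (field; lra).
  rewrite S_INR; lra.
Qed.

(* The two integrals are compared on uniform partitions of
   [u,a] and of [u,b] = [u,a] ++ [a,b]. *)
Lemma RS_increment f al u a b I1 I2 c w : u < a -> a < b ->
  RS_integral f al u a I1 -> RS_integral f al u b I2 ->
  (forall t, a <= t <= b -> Rabs (f t - c) <= w) ->
  (forall s t, a <= s -> s <= t -> t <= b -> al s <= al t) ->
  Rabs (I2 - I1 - c * (al b - al a)) <= w * (al b - al a).
Proof.
  intros Hua Hab H1 H2 Hw Hal. apply Rle_plus_epsilon. intros eps Heps.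
  destruct (H1 (eps / 2)) as [d1 [Hd1 Hs1]]; [lra|].
  destruct (H2 (eps / 2)) as [d2 [Hd2 Hs2]]; [lra|].
  set (d := Rmin d1 d2). assert (d <= d1) by apply Rmin_l. assert (d <= d2) by apply Rmin_r.
  assert (Hd : 0 < d) by (apply Rmin_pos; lra).
  destruct (uniform_mesh_small (b - u) d Hd) as [N [HN [HNpos Hmesh]]].
  assert (Hsmall : forall p q, p <= q <= b -> u <= p -> (q - p) / INR N < d).
  { intros p q Hpq Hp. apply Rle_lt_trans with ((b - u) / INR N); [|exact Hmesh].
    unfold Rdiv; apply Rmult_le_compat_r; [left; apply Rinv_0_lt_compat|]; lra. }
  set (x := unif_part u a N). set (y := unif_part a b N).
  assert (Hxy : x N = y O) by (unfold x, y; rewrite unif_part_N, unif_part_0 by (exact HN); reflexivity).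
  assert (Hxc : forall j, (j < N)%nat -> x j <= x j <= x (S j) /\ x (S j) - x j < d).
  { intros j _. unfold x; pose proof (unif_part_step u a N j). pose proof (Hsmall u a ltac:(lra) ltac:(lra)).
    assert (0 < (a - u) / INR N) by (apply Rdiv_lt_0_compat; lra). lra. }
  assert (Hyc : forall j, (j < N)%nat -> y j <= y j <= y (S j) /\ y (S j) - y j < d).
  { intros j _. unfold y; pose proof (unif_part_step a b N j). pose proof (Hsmall a b ltac:(lra) ltac:(lra)).
    assert (0 < (b - a) / INR N) by (apply Rdiv_lt_0_compat; lra). lra. }
  assert (A1 : Rabs (RS_sum f al x N - I1) < eps / 2).
  { apply Hs1; [apply unif_part_0 | apply unif_part_N; exact HN | |];
      intros j Hj; specialize (Hxc j Hj); lra. }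
  assert (A2 : Rabs (RS_sum f al x N + RS_sum f al y N - I2) < eps / 2).
  { rewrite <- RS_sum_concat by exact Hxy.
    pose proof (concat_part_cells (fun p q => p <= p <= q /\ q - p < d) x y N N Hxy Hxc Hyc) as Hc.
    apply Hs2.
    - rewrite concat_part_left by lia. apply unif_part_0.
    - rewrite concat_part_right by exact Hxy. apply unif_part_N; exact HN.
    - intros i Hi; destruct (Hc i Hi); lra.
    - intros i Hi; destruct (Hc i Hi); lra. }
  assert (A3 : Rabs (RS_sum f al y N - c * (al b - al a)) <= w * (al b - al a)).
  { apply RS_sum_deviation with (a := a) (b := b); auto.
    - apply unif_part_0.
    - apply unif_part_N; exact HN.
    - intros j Hj; specialize (Hyc j Hj); lra. }
  apply Rabs_def2 in A1. apply Rabs_def2 in A2. apply Rabs_le_bounds in A3.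
  apply Rabs_le. lra.
Qed.

Lemma RS_scal f g al a b I C : RS_integral f al a b I -> (forall t, g t = C * f t) ->
  RS_integral g al a b (C * I).
Proof.
  intros H Hg eps Heps. pose proof (Rabs_pos C).
  destruct (H (eps / (Rabs C + 1))) as [d [Hd Hs]]; [apply Rdiv_lt_0_compat; lra|].
  exists d; split; [exact Hd|]. intros N x xi Hx0 HxN Ht Hm.
  specialize (Hs N x xi Hx0 HxN Ht Hm).
  set (err := sumN (fun i => f (xi i) * (al (x (S i)) - al (x i))) N - I) in Hs.
  replace (sumN (fun i => g (xi i) * (al (x (S i)) - al (x i))) N - C * I) with (C * err).
  2:{ unfold err. rewrite Rmult_minus_distr_l, <- sumN_scal. f_equal. apply sumN_ext; intros; rewrite Hg; ring. }
  rewrite Rabs_mult. pose proof (Rabs_pos err).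
  apply Rle_lt_trans with ((Rabs C + 1) * Rabs err); [nra|].
  replace eps with ((Rabs C + 1) * (eps / (Rabs C + 1))) by (field; lra).
  apply Rmult_lt_compat_l; lra.
Qed.

Lemma mvt_cell Phi phi a b q w : a <= b ->
  (forall t, a <= t <= b -> derivable_pt_lim Phi t (phi t)) ->
  (forall t, a <= t <= b -> Rabs (phi t - q) <= w) ->
  Rabs (q * (b - a) - (Phi b - Phi a)) <= w * (b - a).
Proof.
  intros Hab HD Hw. destruct (Req_dec a b) as [<-|Hne].
  - replace (q * (a - a) - (Phi a - Phi a)) with 0 by ring. rewrite Rabs_R0. lra.
  - destruct (MVT_cor2 Phi phi a b ltac:(lra) HD) as [eta [He Heta]]. rewrite He.
    replace (q * (b - a) - phi eta * (b - a)) with (- ((phi eta - q) * (b - a))) by ring.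
    rewrite Rabs_Ropp, Rabs_mult, (Rabs_right (b - a)) by lra.
    apply Rmult_le_compat_r; [lra | apply Hw; lra].
Qed.

Lemma RS_antideriv f al Phi phi u v K c : u < v ->
  (forall t, u <= t <= v -> derivable_pt_lim Phi t (phi t)) ->
  (forall t, u <= t <= v -> continuity_pt phi t) ->
  (forall s t, u <= s <= v -> u <= t <= v -> al t - al s = c * (t - s)) ->
  (forall t, u <= t <= v -> f t = K * phi t) ->
  RS_integral f al u v (K * c * (Phi v - Phi u)).
Proof.
  intros Huv HD HC Hal Hf eps Heps. pose proof (Rabs_pos (K * c)) as HKc.
  set (e := eps / ((Rabs (K * c) + 1) * (v - u + 1))).
  assert (He : 0 < e) by (apply Rdiv_lt_0_compat; [lra | apply Rmult_lt_0_compat; lra]).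
  destruct (Heine_cor2 HC (mkposreal e He)) as [dl Hdl]; simpl in Hdl.
  exists (pos dl); split; [apply cond_pos|]. intros N x xi Hx0 HxN Ht Hm.
  assert (Hmon : forall i, (i < N)%nat -> x i <= x (S i)) by (intros i Hi; specialize (Ht i Hi); lra).
  pose proof (partition_bounds x N Hmon) as Hin. rewrite Hx0, HxN in Hin.
  assert (Hcell : forall i, (i < N)%nat ->
     Rabs (f (xi i) * (al (x (S i)) - al (x i)) - K * c * (Phi (x (S i)) - Phi (x i)))
       <= Rabs (K * c) * (e * (x (S i) - x i))).
  { intros i Hi. pose proof (Hin i ltac:(lia)). pose proof (Hin (S i) ltac:(lia)).
    pose proof (Ht i Hi). pose proof (Hm i Hi).
    rewrite Hf, Hal by lra.
    replace (K * phi (xi i) * (c * (x (S i) - x i)) - K * c * (Phi (x (S i)) - Phi (x i)))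
      with ((K * c) * (phi (xi i) * (x (S i) - x i) - (Phi (x (S i)) - Phi (x i)))) by ring.
    rewrite Rabs_mult. apply Rmult_le_compat_l; [exact HKc|].
    apply mvt_cell with (phi := phi); [lra | intros t Ht'; apply HD; lra |].
    intros t Ht'. rewrite Rabs_minus_sym. left. apply Hdl; try lra. apply Rabs_def1; lra. }
  assert (Htot : Rabs (sumN (fun i => f (xi i) * (al (x (S i)) - al (x i))) N - K * c * (Phi v - Phi u))
                 <= Rabs (K * c) * (e * (v - u))).
  { rewrite <- Hx0, <- HxN, <- (sumN_tele (fun i => Phi (x i))), <- sumN_scal, <- sumN_minus.
    replace (x N - x O) with (sumN (fun i => x (S i) - x i) N) by apply sumN_tele.
    rewrite <- !sumN_scal. eapply Rle_trans; [apply sumN_abs | apply sumN_le; exact Hcell]. }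
  eapply Rle_lt_trans; [exact Htot|].
  assert (Hlt : Rabs (K * c) * (v - u) < (Rabs (K * c) + 1) * (v - u + 1)) by nra.
  replace eps with (e * ((Rabs (K * c) + 1) * (v - u + 1))) by (unfold e; field; lra).
  nra.
Qed.

Definition negligible (x : R) (E g : R -> R) : Prop :=
  forall eps, 0 < eps -> exists del, 0 < del /\
    forall y, Rabs (y - x) < del -> Rabs (E y) <= eps * g y.

Lemma continuity_pt_eps f x : continuity_pt f x ->
  forall eps, 0 < eps -> exists del, 0 < del /\ forall y, Rabs (y - x) < del -> Rabs (f y - f x) < eps.
Proof.
  intros H eps Heps. destruct (H eps Heps) as [del [Hdel Hd]]. exists del; split; [exact Hdel|].
  intros y Hy. destruct (Req_dec y x) as [->|Hne].
  - rewrite Rminus_diag, Rabs_R0; exact Heps.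
  - apply (Hd y). split; [split; [exact I | auto] | exact Hy].
Qed.

Lemma negl_ext x E1 E2 g : (forall y, E1 y = E2 y) -> negligible x E1 g -> negligible x E2 g.
Proof.
  intros Heq H eps Heps. destruct (H eps Heps) as [del [Hdel Hd]].
  exists del; split; [exact Hdel|]. intros y Hy. rewrite <- Heq. auto.
Qed.

Lemma negl_weaken x E g1 g2 : (forall y, g1 y <= g2 y) -> negligible x E g1 -> negligible x E g2.
Proof.
  intros Hg H eps Heps. destruct (H eps Heps) as [del [Hdel Hd]].
  exists del; split; [exact Hdel|]. intros y Hy. specialize (Hd y Hy). specialize (Hg y). nra.
Qed.

Lemma negl_add x E1 E2 g : negligible x E1 g -> negligible x E2 g ->
  negligible x (fun y => E1 y + E2 y) g.
Proof.
  intros H1 H2 eps Heps.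
  destruct (H1 (eps / 2)) as [d1 [Hd1 D1]]; [lra|]. destruct (H2 (eps / 2)) as [d2 [Hd2 D2]]; [lra|].
  exists (Rmin d1 d2); split; [apply Rmin_pos; lra|]. intros y Hy.
  pose proof (Rmin_l d1 d2). pose proof (Rmin_r d1 d2).
  specialize (D1 y ltac:(lra)). specialize (D2 y ltac:(lra)).
  eapply Rle_trans; [apply Rabs_triang | lra].
Qed.

Lemma negl_scal x E g c : negligible x E g -> negligible x (fun y => c * E y) g.
Proof.
  intros H eps Heps. pose proof (Rabs_pos c).
  destruct (H (eps / (Rabs c + 1))) as [del [Hdel Hd]]; [apply Rdiv_lt_0_compat; lra|].
  exists del; split; [exact Hdel|]. intros y Hy. specialize (Hd y Hy).
  assert (0 <= g y) by (pose proof (Rabs_pos (E y)); assert (0 < eps / (Rabs c + 1)) by (apply Rdiv_lt_0_compat; lra); nra).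
  rewrite Rabs_mult. apply Rle_trans with ((Rabs c + 1) * (eps / (Rabs c + 1) * g y)).
  - pose proof (Rabs_pos (E y)). nra.
  - right; field; lra.
Qed.

Lemma negl_minus x E1 E2 g : negligible x E1 g -> negligible x E2 g ->
  negligible x (fun y => E1 y - E2 y) g.
Proof.
  intros H1 H2. apply negl_ext with (fun y => E1 y + -1 * E2 y); [intros; ring|].
  apply negl_add; [exact H1 | apply negl_scal; exact H2].
Qed.

Lemma negl_mul_cont x E g B : negligible x E g -> continuity_pt B x ->
  negligible x (fun y => B y * E y) g.
Proof.
  intros H HB eps Heps. pose proof (Rabs_pos (B x)).
  destruct (continuity_pt_eps B x HB 1 ltac:(lra)) as [d1 [Hd1 D1]].
  destruct (H (eps / (Rabs (B x) + 1))) as [d2 [Hd2 D2]]; [apply Rdiv_lt_0_compat; lra|].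
  exists (Rmin d1 d2); split; [apply Rmin_pos; lra|]. intros y Hy.
  pose proof (Rmin_l d1 d2). pose proof (Rmin_r d1 d2).
  specialize (D1 y ltac:(lra)). specialize (D2 y ltac:(lra)).
  assert (HBy : Rabs (B y) <= Rabs (B x) + 1).
  { replace (B y) with (B x + (B y - B x)) by ring. eapply Rle_trans; [apply Rabs_triang | lra]. }
  rewrite Rabs_mult. pose proof (Rabs_pos (E y)). pose proof (Rabs_pos (B y)).
  apply Rle_trans with ((Rabs (B x) + 1) * (eps / (Rabs (B x) + 1) * g y)).
  - apply Rmult_le_compat; lra.
  - right; field; lra.
Qed.

Lemma negl_mul_vanish x E g B : (forall y, Rabs (E y) <= g y) -> continuity_pt B x -> B x = 0 ->
  negligible x (fun y => B y * E y) g.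
Proof.
  intros HE HB HB0 eps Heps. destruct (continuity_pt_eps B x HB eps Heps) as [del [Hdel D]].
  exists del; split; [exact Hdel|]. intros y Hy. specialize (D y Hy). rewrite HB0, Rminus_0_r in D.
  rewrite Rabs_mult. pose proof (Rabs_pos (E y)). pose proof (Rabs_pos (B y)). pose proof (HE y).
  apply Rmult_le_compat; lra.
Qed.

Lemma negl_of_deriv f x d : derivable_pt_lim f x d ->
  negligible x (fun y => f y - f x - d * (y - x)) (fun y => Rabs (y - x)).
Proof.
  intros H eps Heps. destruct (H eps Heps) as [del Hd]. exists del; split; [apply cond_pos|].
  intros y Hy. destruct (Req_dec y x) as [->|Hne].
  - replace (f x - f x - d * (x - x)) with 0 by ring. rewrite Rminus_diag, Rabs_R0. lra.
  - specialize (Hd (y - x) ltac:(lra) Hy). replace (x + (y - x)) with y in Hd by ring.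
    replace (f y - f x - d * (y - x)) with (((f y - f x) / (y - x) - d) * (y - x)) by (field; lra).
    rewrite Rabs_mult. apply Rmult_le_compat_r; [apply Rabs_pos | lra].
Qed.

Lemma negl_of_deriv_comp f s x d : derivable_pt_lim f (s x) d -> continuity_pt s x ->
  negligible x (fun y => f (s y) - f (s x) - d * (s y - s x)) (fun y => Rabs (s y - s x)).
Proof.
  intros Hf Hs eps Heps. destruct (negl_of_deriv f (s x) d Hf eps Heps) as [d1 [Hd1 D1]].
  destruct (continuity_pt_eps s x Hs d1 Hd1) as [d2 [Hd2 D2]].
  exists d2; split; [exact Hd2|]. intros y Hy. apply D1, D2, Hy.
Qed.

(* Converse: if f y - f x - d (y - x) = o(|y - x| + |f y - f x|), then f'(x) = d.
   Indeed the error bound first forces |f y - f x| = O(|y - x|). *)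
Lemma derivable_of_negl f x d :
  negligible x (fun y => f y - f x - d * (y - x)) (fun y => Rabs (y - x) + Rabs (f y - f x)) ->
  derivable_pt_lim f x d.
Proof.
  intros H e He. pose proof (Rabs_pos d) as Hd0. set (C := 2 * Rabs d + 3).
  set (eps := Rmin (1 / 2) (e / (2 * C))).
  assert (Heps : 0 < eps) by (apply Rmin_pos; [lra | apply Rdiv_lt_0_compat; unfold C; lra]).
  assert (He1 : eps <= 1 / 2) by apply Rmin_l. assert (He2 : eps <= e / (2 * C)) by apply Rmin_r.
  destruct (H eps Heps) as [del [Hdel D]]. exists (mkposreal del Hdel). intros hh Hh0 Hh; simpl in Hh.
  specialize (D (x + hh)). replace (x + hh - x) with hh in D by ring. specialize (D Hh).
  set (df := f (x + hh) - f x) in D. pose proof (Rabs_pos hh). pose proof (Rabs_pos df).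
  assert (Hdf : Rabs df <= 2 * (Rabs d + 1) * Rabs hh).
  { assert (Rabs df <= Rabs (df - d * hh) + Rabs d * Rabs hh).
    { rewrite <- Rabs_mult. replace df with ((df - d * hh) + d * hh) at 1 by ring. apply Rabs_triang. }
    assert (eps * Rabs hh <= 1 / 2 * Rabs hh) by (apply Rmult_le_compat_r; lra).
    assert (eps * Rabs df <= 1 / 2 * Rabs df) by (apply Rmult_le_compat_r; lra).
    lra. }
  assert (Herr : Rabs (df - d * hh) <= e / 2 * Rabs hh).
  { assert (eps * Rabs df <= eps * (2 * (Rabs d + 1) * Rabs hh)) by (apply Rmult_le_compat_l; lra).
    apply Rle_trans with (eps * (C * Rabs hh)); [unfold C; lra|].
    apply Rle_trans with (e / (2 * C) * (C * Rabs hh)); [apply Rmult_le_compat_r; [unfold C; nra | exact He2]|].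
    right; field; unfold C; lra. }
  assert (Hhp : 0 < Rabs hh) by (apply Rabs_pos_lt; exact Hh0).
  replace ((f (x + hh) - f x) / hh - d) with ((df - d * hh) / hh) by (unfold df; field; exact Hh0).
  unfold Rdiv; rewrite Rabs_mult, Rabs_inv.
  apply Rmult_lt_reg_r with (Rabs hh); [exact Hhp|]. rewrite Rmult_assoc, Rinv_l by lra.
  assert (0 < e * Rabs hh) by (apply Rmult_lt_0_compat; lra). lra.
Qed.

Lemma RS_primitive_negl phi al Phi u v d0 : 0 < d0 ->
  (forall w, Rabs (w - v) < d0 -> u < w /\ RS_integral phi al u w (Phi w)) ->
  (forall s t, Rabs (s - v) < d0 -> Rabs (t - v) < d0 -> s <= t -> al s <= al t) ->
  continuity_pt phi v ->
  negligible v (fun y => Phi y - Phi v - phi v * (al y - al v)) (fun y => Rabs (al y - al v)).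
Proof.
  intros Hd0 HI Hal Hphi eps Heps.
  destruct (continuity_pt_eps phi v Hphi eps Heps) as [d1 [Hd1 D1]].
  exists (Rmin d0 d1); split; [apply Rmin_pos; lra|]. intros y Hy.
  pose proof (Rmin_l d0 d1). pose proof (Rmin_r d0 d1).
  assert (Hnear : forall t, Rabs (t - v) <= Rabs (y - v) -> Rabs (t - v) < d0 /\ Rabs (phi t - phi v) <= eps)
    by (intros t Ht; split; [lra | left; apply D1; lra]).
  destruct (HI v ltac:(rewrite Rminus_diag, Rabs_R0; lra)) as [Huv Iv].
  destruct (HI y ltac:(lra)) as [Huy Iy].
  assert (Hv0 : Rabs (v - v) < d0) by (rewrite Rminus_diag, Rabs_R0; lra).
  assert (Hy0 : Rabs (y - v) < d0) by lra.
  destruct (Rtotal_order v y) as [Hlt|[<-|Hgt]].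
  - assert (Hm : al v <= al y) by (apply Hal; auto; lra).
    rewrite (Rabs_right (al y - al v)) by lra.
    apply (RS_increment phi al u v y (Phi v) (Phi y)); auto.
    + intros t Ht. apply Hnear. rewrite !Rabs_right; lra.
    + intros s t Hs Hst Ht. apply Hal; [apply Hnear | apply Hnear | lra]; rewrite !Rabs_right; lra.
  - replace (Phi v - Phi v - phi v * (al v - al v)) with 0 by ring.
    rewrite Rminus_diag, !Rabs_R0. lra.
  - assert (Hm : al y <= al v) by (apply Hal; auto; lra).
    rewrite (Rabs_left1 (al y - al v)) by lra.
    replace (Phi y - Phi v - phi v * (al y - al v)) with (- (Phi v - Phi y - phi v * (al v - al y))) by ring.
    rewrite Rabs_Ropp. replace (eps * - (al y - al v)) with (eps * (al v - al y)) by ring.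
    apply (RS_increment phi al u y v (Phi y) (Phi v)); auto.
    + intros t Ht. apply Hnear. rewrite !Rabs_left1; lra.
    + intros s t Hs Hst Ht. apply Hal; [apply Hnear | apply Hnear | lra]; rewrite !Rabs_left1; lra.
Qed.

(* Implicit differentiation.  Expanding the product, the terms in A(v) cancel and
   what remains is a1 g(v)^n (g(v) (y - v) - m (g y - g v)) = o(|y - v| + |g y - g v|);
   hence g'(v) = g(v) / m as soon as a1 g(v)^n m <> 0. *)
Lemma slope_from_product_expansion (A g : R -> R) (v a1 b m : R) (n : nat) :
  derivable_pt_lim A v a1 -> continuity_pt g v -> a1 * g v ^ n * m <> 0 ->
  b = m * a1 + INR (S n) * A v ->
  negligible v (fun y => A y * g y ^ S n - A v * g v ^ S n - b * g v ^ n * (g y - g v))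
               (fun y => Rabs (g y - g v)) ->
  derivable_pt_lim g v (g v / m).
Proof.
  intros HA Hg Hnz Hb Hexp. apply derivable_of_negl.
  set (s := g v) in *.
  set (D := fun y => Rabs (y - v) + Rabs (g y - s)).
  assert (HD1 : forall y, Rabs (y - v) <= D y) by (intros y; unfold D; pose proof (Rabs_pos (g y - s)); lra).
  assert (HD2 : forall y, Rabs (g y - s) <= D y) by (intros y; unfold D; pose proof (Rabs_pos (y - v)); lra).
  assert (Hpow : continuity_pt (fun y => g y ^ S n) v)
    by (apply (continuity_pt_comp g (fun z => z ^ S n)); [exact Hg | apply derivable_continuous_pt, derivable_pt_pow]).
  assert (N1 : negligible v (fun y => g y ^ S n * (A y - A v - a1 * (y - v))) D)
    by (apply negl_mul_cont; [apply negl_weaken with (2 := negl_of_deriv A v a1 HA); exact HD1 | exact Hpow]).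
  assert (N2 : negligible v (fun y => a1 * (g y ^ S n - s ^ S n) * (y - v)) D).
  { apply (negl_mul_vanish v (fun y => y - v) D (fun y => a1 * (g y ^ S n - s ^ S n))); [exact HD1 | | unfold s; ring].
    apply continuity_pt_scal, continuity_pt_minus; [exact Hpow | apply continuity_pt_const; intros ? ?; reflexivity]. }
  assert (N3 : negligible v (fun y => A v * (g y ^ S n - s ^ S n - INR (S n) * s ^ n * (g y - s))) D).
  { apply negl_scal, negl_weaken with (1 := HD2).
    exact (negl_of_deriv_comp (fun z => z ^ S n) g v _ (derivable_pt_lim_pow s (S n)) Hg). }
  assert (N0 : negligible v (fun y => A y * g y ^ S n - A v * s ^ S n - b * s ^ n * (g y - s)) D)
    by (apply negl_weaken with (1 := HD2); exact Hexp).
  apply negl_ext with (fun y => - / (a1 * s ^ n * m) *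
      ((A y * g y ^ S n - A v * s ^ S n - b * s ^ n * (g y - s))
       - g y ^ S n * (A y - A v - a1 * (y - v)) - a1 * (g y ^ S n - s ^ S n) * (y - v)
       - A v * (g y ^ S n - s ^ S n - INR (S n) * s ^ n * (g y - s)))).
  - intros y. rewrite Hb. simpl pow. field. repeat split; intros Hz; apply Hnz; rewrite Hz; ring.
  - apply negl_scal, negl_minus; [apply negl_minus; [apply negl_minus|] |]; assumption.
Qed.

(* Numerators of the derivatives of the divided difference t |-> (h t - h u) / (t - u).
   With hd j the j-th derivative of h, the j-th derivative of the divided difference is
   dd_numer hd h u j t / (t - u)^(j+1), and d/dt dd_numer j t = (t - u)^j * hd (j+1) t. *)
Fixpoint dd_numer (hd : nat -> R -> R) (h : R -> R) (u : R) (j : nat) (t : R) : R :=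
  match j with
  | O => hd O t - h u
  | S j' => (t - u) ^ (S j') * hd (S j') t - INR (S j') * dd_numer hd h u j' t
  end.

Lemma derivable_pt_lim_shift_pow u n t :
  derivable_pt_lim (fun t => (t - u) ^ n) t (INR n * (t - u) ^ pred n).
Proof.
  replace (INR n * (t - u) ^ pred n) with ((INR n * (t - u) ^ pred n) * (1 - 0)) by ring.
  apply (derivable_pt_lim_comp (fun t => t - u) (fun y => y ^ n)); [|apply derivable_pt_lim_pow].
  apply (derivable_pt_lim_minus id (fct_cte u)); [apply derivable_pt_lim_id | apply derivable_pt_lim_const].
Qed.

Lemma dd_numer_deriv hd h u k t :
  (forall i, (i < k)%nat -> derivable_pt_lim (hd i) t (hd (S i) t)) ->
  forall j, (j < k)%nat -> derivable_pt_lim (dd_numer hd h u j) t ((t - u) ^ j * hd (S j) t).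
Proof.
  intros Hd j. induction j as [|j IH]; intros Hj.
  - simpl. replace (1 * hd 1%nat t) with (hd 1%nat t - 0) by ring.
    apply (derivable_pt_lim_minus (hd O) (fct_cte (h u))); [auto | apply derivable_pt_lim_const].
  - change (dd_numer hd h u (S j)) with (fun t => (t - u) ^ (S j) * hd (S j) t - INR (S j) * dd_numer hd h u j t).
    replace ((t - u) ^ S j * hd (S (S j)) t) with
      ((INR (S j) * (t - u) ^ pred (S j) * hd (S j) t + (t - u) ^ (S j) * hd (S (S j)) t)
        - (0 * dd_numer hd h u j t + INR (S j) * ((t - u) ^ j * hd (S j) t))) by (simpl pred; ring).
    apply (derivable_pt_lim_minus (fun t => (t - u) ^ (S j) * hd (S j) t) (fun t => INR (S j) * dd_numer hd h u j t)).
    + apply (derivable_pt_lim_mult (fun t => (t - u) ^ (S j)) (hd (S j))); [apply derivable_pt_lim_shift_pow | auto].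
    + apply (derivable_pt_lim_mult (fct_cte (INR (S j))) (dd_numer hd h u j));
        [apply derivable_pt_lim_const | apply IH; lia].
Qed.

Lemma dd_numer_at_base hd h u : hd O u = h u -> forall j, dd_numer hd h u j u = 0.
Proof. intros H j; induction j as [|j IH]; simpl; [rewrite H; ring | rewrite IH; ring]. Qed.

Lemma dd_quotient_deriv hd h u k t j :
  (forall i, (i < k)%nat -> derivable_pt_lim (hd i) t (hd (S i) t)) -> (j < k)%nat -> t <> u ->
  derivable_pt_lim (fun w => dd_numer hd h u j w / (w - u) ^ (S j)) t
                   (dd_numer hd h u (S j) t / (t - u) ^ (S (S j))).
Proof.
  intros Hd Hj Htu. assert (Hne : t - u <> 0) by lra.
  assert (Hp : (t - u) ^ j <> 0) by (apply pow_nonzero; exact Hne).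
  replace (dd_numer hd h u (S j) t / (t - u) ^ S (S j)) with
    ((((t - u) ^ j * hd (S j) t) * (t - u) ^ (S j) - (INR (S j) * (t - u) ^ pred (S j)) * dd_numer hd h u j t)
     / Rsqr ((t - u) ^ (S j))).
  2:{ change (dd_numer hd h u (S j) t) with ((t - u) ^ (S j) * hd (S j) t - INR (S j) * dd_numer hd h u j t).
      simpl pred. unfold Rsqr. rewrite <- !tech_pow_Rmult. field. split; assumption. }
  apply (derivable_pt_lim_div (dd_numer hd h u j) (fun w => (w - u) ^ (S j))).
  - apply dd_numer_deriv with k; assumption.
  - apply derivable_pt_lim_shift_pow.
  - apply pow_nonzero; exact Hne.
Qed.

Lemma derivable_pt_lim_local f g x d : derivable_pt_lim f x d ->
  (exists del, 0 < del /\ forall y, Rabs (y - x) < del -> f y = g y) -> derivable_pt_lim g x d.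
Proof.
  intros Hf [del [Hdel Heq]] eps Heps. destruct (Hf eps Heps) as [d1 Hd1].
  assert (Hm : 0 < Rmin d1 del) by (apply Rmin_pos; [apply cond_pos | exact Hdel]).
  exists (mkposreal _ Hm). intros hh Hh0 Hh; simpl in Hh.
  pose proof (Rmin_l d1 del). pose proof (Rmin_r d1 del).
  rewrite <- !Heq.
  - apply Hd1; [exact Hh0 | lra].
  - rewrite Rminus_diag, Rabs_R0; exact Hdel.
  - replace (x + hh - x) with hh by ring. lra.
Qed.

Lemma dd_chain hd h u k (Dh E : R -> Prop) m :
  (forall x, Dh x -> hd O x = h x) ->
  (forall j x, (j < k)%nat -> Dh x -> derivable_pt_lim (hd j) x (hd (S j) x)) ->
  (m <= k)%nat -> (forall w, E w -> u < w /\ Dh w) ->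
  deriv_chain E (fun w => (h w - h u) / (w - u)) m (fun j w => dd_numer hd h u j w / (w - u) ^ (S j)).
Proof.
  intros H0 Hd Hm HE. split.
  - intros x Ex. destruct (HE x Ex). simpl. rewrite H0 by assumption. field. lra.
  - intros j x Hj Ex. destruct (HE x Ex). apply dd_quotient_deriv with k; [intros; apply Hd; auto | lia | lra].
Qed.

Lemma dd_chain_unique hd h u k (Dh E : R -> Prop) m G :
  (forall x, Dh x -> hd O x = h x) ->
  (forall j x, (j < k)%nat -> Dh x -> derivable_pt_lim (hd j) x (hd (S j) x)) ->
  (m <= k)%nat -> (forall w, E w -> u < w /\ Dh w) ->
  (forall w, E w -> exists del, 0 < del /\ forall y, Rabs (y - w) < del -> E y) ->
  deriv_chain E (fun w => (h w - h u) / (w - u)) m G ->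
  forall j, (j <= m)%nat -> forall w, E w -> G j w = dd_numer hd h u j w / (w - u) ^ (S j).
Proof.
  intros H0 Hd Hm HE Hop [HG0 HGd] j. induction j as [|j IH]; intros Hj w Ew; destruct (HE w Ew).
  - rewrite HG0 by exact Ew. simpl. rewrite H0 by assumption. field. lra.
  - apply (uniqueness_limite (G j) w); [apply HGd; auto; lia|].
    apply derivable_pt_lim_local with (fun w => dd_numer hd h u j w / (w - u) ^ (S j)).
    + apply dd_quotient_deriv with k; [intros; apply Hd; auto | lia | lra].
    + destruct (Hop w Ew) as [del [Hdel Hy]]. exists del; split; [exact Hdel|].
      intros y Hyw. symmetry. apply IH; [lia | auto].
Qed.

Lemma dd_numer_right_limit hd h l t j : limit1_in h (fun u => l < u) (h l) l ->
  limit1_in (fun u => dd_numer hd h u j t) (fun u => l < u) (dd_numer hd h l j t) l.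
Proof.
  intros Hh. induction j as [|j IH]; simpl.
  - apply (limit_minus (fun _ => hd O t) h); [exact (limit_free (fun _ => hd O t) _ 0 l) | exact Hh].
  - apply (limit_minus (fun u => (t - u) ^ S j * hd (S j) t) (fun u => INR (S j) * dd_numer hd h u j t)).
    + apply (limit_mul (fun u => (t - u) ^ S j) (fun _ => hd (S j) t));
        [| exact (limit_free (fun _ => hd (S j) t) _ 0 l)].
      assert (Hc : continuity_pt (fun u => (t - u) ^ S j) l).
      { apply (continuity_pt_comp (fun u => t - u) (fun z => z ^ S j));
          [| apply derivable_continuous_pt, derivable_pt_pow].
        apply (continuity_pt_minus (fct_cte t) id);
          [apply continuity_pt_const; intros ? ?; reflexivity | apply derivable_continuous_pt, derivable_pt_id]. }
      apply (limit1_imp _ (D_x no_cond l)); [intros u Hu; split; [exact I | lra] | exact Hc].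
    + apply (limit_mul (fun _ => INR (S j)) (fun u => dd_numer hd h u j t));
        [exact (limit_free (fun _ => INR (S j)) _ 0 l) | exact IH].
Qed.

Lemma abs_continuous_continuity F : abs_continuous F -> continuity F.
Proof.
  intros HF x eps Heps. destruct (HF eps Heps) as [d [Hd H]].
  exists d; split; [exact Hd|]. intros y [_ Hy]. simpl in *. unfold R_dist in *.
  destruct (Rle_dec x y) as [Hxy|Hxy].
  - specialize (H 1%nat (fun _ => x) (fun _ => y)). simpl in H.
    assert (0 + Rabs (F y - F x) < eps); [|lra].
    apply H; [intros; lra | intros; lia | rewrite Rabs_right in Hy; lra].
  - specialize (H 1%nat (fun _ => y) (fun _ => x)). simpl in H.
    rewrite Rabs_minus_sym. assert (0 + Rabs (F x - F y) < eps); [|lra].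
    apply H; [intros; lra | intros; lia | rewrite Rabs_left in Hy; lra].
Qed.

Lemma F_pos_right F l : is_cdf F -> is_lF F l -> forall x, l < x -> 0 < F x.
Proof.
  intros [Hmon _] [_ Hl] x Hx. destruct (Rlt_le_dec 0 (F x)) as [H|H]; [exact H|].
  exfalso. assert (x <= l); [|lra].
  apply Hl. intros y Hy. destruct (Rle_dec x y) as [|Hn]; [assumption|].
  assert (F y <= F x) by (apply Hmon; lra). lra.
Qed.

(* F vanishes at l: it is positive to the right of l, nonpositive to the left, and continuous. *)
Lemma F_at_l F l : is_cdf F -> abs_continuous F -> is_lF F l -> F l = 0.
Proof.
  intros HF HFa Hl. pose proof (F_pos_right F l HF Hl) as Hpos. destruct Hl as [Hl1 _].
  pose proof (continuity_pt_eps F l (abs_continuous_continuity F HFa l)) as Hc.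
  destruct (Rtotal_order (F l) 0) as [H|[H|H]]; [exfalso | exact H | exfalso].
  - destruct (Hc (- F l)) as [d [Hd D]]; [lra|].
    specialize (D (l + d / 2) ltac:(rewrite Rabs_right; lra)). apply Rabs_def2 in D.
    specialize (Hpos (l + d / 2) ltac:(lra)). lra.
  - destruct (Hc (F l) H) as [d [Hd D]].
    specialize (D (l - d / 2) ltac:(rewrite Rabs_left; lra)). apply Rabs_def2 in D.
    assert (l <= l - d / 2) by (apply Hl1; lra). lra.
Qed.

Lemma open_lt1 F l x : is_cdf F -> in_open F l x -> F x < 1.
Proof. intros [Hmon _] [_ [y [Hy1 Hy2]]]. assert (F x <= F y) by (apply Hmon; lra). lra. Qed.

Lemma open_nbhd F l x : in_open F l x -> exists del, 0 < del /\ forall y, Rabs (y - x) < del -> in_open F l y.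
Proof.
  intros [Hlx [y0 [Hy0 Hy1]]]. exists (Rmin (x - l) (y0 - x)). split; [apply Rmin_pos; lra|].
  intros y Hy. pose proof (Rmin_l (x - l) (y0 - x)). pose proof (Rmin_r (x - l) (y0 - x)).
  apply Rabs_def2 in Hy. split; [lra | exists y0; split; [lra | exact Hy1]].
Qed.

Lemma below_rF_of_lt1 F x : abs_continuous F -> F x < 1 -> below_rF F x.
Proof.
  intros HFa Hx. destruct (continuity_pt_eps F x (abs_continuous_continuity F HFa x) (1 - F x)) as [d [Hd D]]; [lra|].
  exists (x + d / 2). split; [lra|].
  specialize (D (x + d / 2) ltac:(rewrite Rabs_right; lra)). apply Rabs_def2 in D. lra.
Qed.

Lemma open_nonempty F l : is_cdf F -> abs_continuous F -> is_lF F l -> exists p, in_open F l p.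
Proof.
  intros HF HFa Hl. pose proof (F_at_l F l HF HFa Hl) as Hl0.
  destruct (continuity_pt_eps F l (abs_continuous_continuity F HFa l) 1) as [d [Hd D]]; [lra|].
  exists (l + d / 2). split; [lra|]. apply below_rF_of_lt1; [exact HFa|].
  specialize (D (l + d / 2) ltac:(rewrite Rabs_right; lra)). apply Rabs_def2 in D. lra.
Qed.

Lemma Rfun_cont F x : abs_continuous F -> F x < 1 -> continuity_pt (Rfun F) x.
Proof.
  intros HFa Hx. unfold Rfun.
  change (fun x => - ln (1 - F x)) with (- (comp ln (fct_cte 1 - F)))%F.
  apply continuity_pt_opp, continuity_pt_comp.
  - apply continuity_pt_minus; [apply continuity_pt_const; intros ? ?; reflexivity | apply abs_continuous_continuity; exact HFa].
  - apply derivable_continuous_pt. exists (/ (1 - F x)). apply derivable_pt_lim_ln. unfold fct_cte, minus_fct. lra.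
Qed.

Lemma Rfun_mono F x y : is_cdf F -> x <= y -> F y < 1 -> Rfun F x <= Rfun F y.
Proof.
  intros [Hmon _] Hxy Hy. assert (F x <= F y) by auto. unfold Rfun.
  destruct (Req_dec (F x) (F y)) as [->|Hne]; [lra|].
  assert (ln (1 - F y) < ln (1 - F x)) by (apply ln_increasing; lra). lra.
Qed.

Lemma Rfun_pos F x : 0 < F x -> F x < 1 -> 0 < Rfun F x.
Proof. intros. unfold Rfun. assert (ln (1 - F x) < ln 1) by (apply ln_increasing; lra). rewrite ln_1 in *. lra. Qed.

Lemma Rfun_right_limit F l : is_cdf F -> abs_continuous F -> is_lF F l ->
  limit1_in (Rfun F) (fun u => l < u) 0 l.
Proof.
  intros HF HFa Hl. pose proof (F_at_l F l HF HFa Hl) as Hl0.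
  replace 0 with (Rfun F l) by (unfold Rfun; rewrite Hl0, Rminus_0_r, ln_1; ring).
  apply (limit1_imp _ (D_x no_cond l)); [intros u Hu; split; [exact I | lra]|].
  apply Rfun_cont; [exact HFa | lra].
Qed.

Lemma h_right_limit F h l : abs_continuous F -> F l = 0 ->
  (forall x, in_closed F l x -> continue_in h (in_closed F l) x) ->
  limit1_in h (fun u => l < u) (h l) l.
Proof.
  intros HFa Hl0 Hhc.
  assert (Hcl : in_closed F l l) by (split; [lra | intros z Hz; exists l; split; lra]).
  intros eps Heps. destruct (Hhc l Hcl eps Heps) as [a [Ha Hh]].
  destruct (continuity_pt_eps F l (abs_continuous_continuity F HFa l) 1) as [d [Hd D]]; [lra|].
  exists (Rmin a d); split; [apply Rmin_pos; lra|]. intros u [Hu Hud]. simpl in Hud. unfold R_dist in Hud.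
  pose proof (Rmin_l a d). pose proof (Rmin_r a d).
  assert (HFu : F u < 1) by (specialize (D u ltac:(lra)); rewrite Hl0 in D; apply Rabs_def2 in D; lra).
  apply Hh. split; [split; [split; [lra | intros z Hz; exists u; split; lra] | lra] | simpl; unfold R_dist; lra].
Qed.

Lemma cond_weight_r1 F k0 u v t : Rfun F v - Rfun F u <> 0 ->
  cond_weight F (S k0) 1 u v t = INR (S k0) * (Rfun F t - Rfun F u) ^ k0 / (Rfun F v - Rfun F u) ^ (S k0).
Proof.
  intros Hne. unfold cond_weight.
  replace (S k0 + 1 - 1)%nat with (S k0) by lia. replace (S k0 - 1)%nat with k0 by lia.
  replace (1 - 1)%nat with O by lia. rewrite fact_simpl, mult_INR.
  unfold Rdiv at 2. rewrite Rpow_mult_distr, pow_inv. simpl fact. simpl pow. simpl INR.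
  pose proof (INR_fact_neq_0 k0). assert ((Rfun F v - Rfun F u) ^ k0 <> 0) by (apply pow_nonzero; exact Hne).
  field. repeat split; assumption.
Qed.

(* For the exponential law R(t) = c (t - l), so given X(n-k) = u and
   X(n+1) = v the variable X(n) has density k (t - u)^(k-1) / (v - u)^k on (u,v), and
   E[h^(k)(X(n))] = k dd_numer_(k-1)(v) / (v - u)^k = k * (k-1)-th derivative of the
   divided difference at v, because dd_numer_(k-1) is a primitive of (t - u)^(k-1) h^(k)
   vanishing at u. *)
Lemma exponential_sufficient (F h : R -> R) (hd : nat -> R -> R) (k : nat) (l c : R) :
  (1 <= k)%nat ->
  deriv_chain (in_open F l) h k hd ->
  (forall x, in_open F l x -> continuity_pt (hd k) x) ->
  rF_infinite F -> 0 < c -> (forall x, l <= x -> F x = 1 - exp (- (c * (x - l)))) ->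
  forall u v, in_open F l u -> in_open F l v -> u < v ->
  forall G, deriv_chain (fun w => u < w /\ in_open F l w) (fun w => (h w - h u) / (w - u)) (k - 1) G ->
  cond_exp F (hd k) k 1 u v (INR k * G (k - 1)%nat v).
Proof.
  intros Hk [Hh0 Hhd] Hhk Hinf Hc HF u v [Hlu _] Hv Huv G HG.
  destruct k as [|k0]; [lia|]. replace (S k0 - 1)%nat with k0 in * by lia.
  assert (Hopen : forall x, l < x -> in_open F l x)
    by (intros x Hx; split; [exact Hx | destruct (Hinf x) as [y Hy]; exists y; exact Hy]).
  assert (HGv : G k0 v = dd_numer hd h u k0 v / (v - u) ^ (S k0)).
  { apply (dd_chain_unique hd h u (S k0) (in_open F l) (fun w => u < w /\ in_open F l w) k0 G Hh0 Hhd);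
      [lia | intros w Hw; exact Hw | | exact HG | lia | split; [exact Huv | exact Hv]].
    intros w [Hw1 Hw2]. exists (w - u); split; [lra|].
    intros y Hy. apply Rabs_def2 in Hy. split; [lra | apply Hopen; lra]. }
  assert (HR : forall t, l <= t -> Rfun F t = c * (t - l)).
  { intros t Ht. unfold Rfun. rewrite HF by exact Ht.
    replace (1 - (1 - exp (- (c * (t - l))))) with (exp (- (c * (t - l)))) by ring.
    rewrite ln_exp. ring. }
  assert (Hvu : (v - u) ^ k0 <> 0) by (apply pow_nonzero; lra).
  set (K := INR (S k0) / ((v - u) ^ (S k0) * c)).
  rewrite HGv. unfold cond_exp.
  replace (INR (S k0) * (dd_numer hd h u k0 v / (v - u) ^ S k0))
    with (K * c * (dd_numer hd h u k0 v - dd_numer hd h u k0 u)).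
  2:{ rewrite dd_numer_at_base by (apply Hh0, Hopen; lra). unfold K. simpl pow. field. lra. }
  apply RS_antideriv with (phi := fun t => (t - u) ^ k0 * hd (S k0) t); [exact Huv | | | |].
  - intros t Ht. apply dd_numer_deriv with (S k0); [|lia]. intros i Hi. apply Hhd; [exact Hi | apply Hopen; lra].
  - intros t Ht. apply (continuity_pt_mult (fun t => (t - u) ^ k0) (hd (S k0))).
    + apply derivable_continuous_pt. eexists. apply derivable_pt_lim_shift_pow.
    + apply Hhk, Hopen; lra.
  - intros s t Hs Ht. rewrite !HR by lra. ring.
  - intros t Ht. rewrite cond_weight_r1 by (rewrite !HR by lra; intros Hz; nra).
    rewrite !HR by lra.
    replace (c * (t - l) - c * (u - l)) with (c * (t - u)) by ring.
    replace (c * (v - l) - c * (u - l)) with (c * (v - u)) by ring.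
    rewrite !Rpow_mult_distr. unfold K. simpl pow.
    assert (c ^ k0 <> 0) by (apply pow_nonzero; lra). field. repeat split; lra.
Qed.

Lemma right_limit_eps f l L : limit1_in f (fun u => l < u) L l ->
  forall eps, 0 < eps -> exists d, 0 < d /\ forall u, l < u < l + d -> Rabs (f u - L) < eps.
Proof.
  intros H eps Heps. destruct (H eps Heps) as [d [Hd D]]. exists d; split; [lra|].
  intros u Hu. apply D. split; [lra | simpl; unfold R_dist; rewrite Rabs_right; lra].
Qed.

Lemma affine_of_slopes f l v d : 0 < d ->
  (forall u, l < u < l + d -> u < v /\ derivable_pt_lim f v ((f v - f u) / (v - u))) ->
  exists c, forall u, l < u < l + d -> f v - f u = c * (v - u).
Proof.
  intros Hd H. set (u0 := l + d / 2). destruct (H u0 ltac:(unfold u0; lra)) as [Hu0 D0].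
  exists ((f v - f u0) / (v - u0)). intros u Hu. destruct (H u Hu) as [Hu' Du].
  pose proof (uniqueness_limite f v _ _ Du D0) as E. rewrite <- E. field. lra.
Qed.

Lemma affine_common_slope f l v1 v2 c1 c2 d1 d2 : 0 < d1 -> 0 < d2 ->
  (forall u, l < u < l + d1 -> f v1 - f u = c1 * (v1 - u)) ->
  (forall u, l < u < l + d2 -> f v2 - f u = c2 * (v2 - u)) -> c1 = c2.
Proof.
  intros Hd1 Hd2 H1 H2. set (m := Rmin d1 d2). pose proof (Rmin_l d1 d2). pose proof (Rmin_r d1 d2).
  assert (Hm : 0 < m) by (apply Rmin_pos; lra).
  set (u1 := l + m / 3). set (u2 := l + 2 * m / 3).
  pose proof (H1 u1 ltac:(unfold u1, m in *; lra)). pose proof (H1 u2 ltac:(unfold u2, m in *; lra)).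
  pose proof (H2 u1 ltac:(unfold u1, m in *; lra)). pose proof (H2 u2 ltac:(unfold u2, m in *; lra)).
  apply Rmult_eq_reg_r with (u2 - u1); [nra | unfold u1, u2; lra].
Qed.

Lemma affine_right_limit f l v c d : 0 < d ->
  (forall u, l < u < l + d -> f v - f u = c * (v - u)) ->
  limit1_in f (fun u => l < u) 0 l -> f v = c * (v - l).
Proof.
  intros Hd Haff Hlim. set (D := fun u => l < u < l + d).
  assert (Hadh : adhDa D l).
  { intros alp Halp. exists (l + Rmin alp d / 2). pose proof (Rmin_l alp d). pose proof (Rmin_r alp d).
    assert (0 < Rmin alp d) by (apply Rmin_pos; lra).
    split; [unfold D; lra | simpl; unfold R_dist; rewrite Rabs_right; lra]. }
  assert (Hf : limit1_in f D 0 l) by (apply (limit1_imp _ (fun u => l < u)); [intros u Hu; apply Hu | exact Hlim]).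
  assert (Haffl : limit1_in f D (f v - c * (v - l)) l).
  { apply (limit1_ext (fun u => f v - c * (v - u))); [intros u Hu; pose proof (Haff u Hu); lra|].
    apply (limit1_imp _ (D_x no_cond l)); [intros u Hu; split; [exact I | unfold D in Hu; lra]|].
    apply continuity_pt_minus; [apply continuity_pt_const; intros ? ?; reflexivity|].
    apply continuity_pt_scal, continuity_pt_minus;
      [apply continuity_pt_const; intros ? ?; reflexivity | apply derivable_continuous_pt, derivable_pt_id]. }
  pose proof (single_limit f D 0 (f v - c * (v - l)) l Hadh Hf Haffl). lra.
Qed.

(* If F is exponential on (l, r_F) then r_F is infinite: otherwise, by the intermediate
   value theorem, F would take a value just below 1 at some point of (l, r_F) where the
   exponential formula keeps F smaller. *)
Lemma exponential_below_rF F l c : is_cdf F -> abs_continuous F -> F l = 0 -> 0 < c ->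
  (forall x, in_open F l x -> F x = 1 - exp (- (c * (x - l)))) ->
  forall x, l < x -> below_rF F x.
Proof.
  intros HF HFa Hl0 Hc HFo x Hx. apply NNPP. intros Hno.
  assert (Hge1 : forall y, x < y -> 1 <= F y)
    by (intros y Hy; apply Rnot_lt_le; intros Hlt; apply Hno; exists y; split; assumption).
  set (z0 := 1 - exp (- (c * (x - l))) / 2).
  assert (Hex : exp (- (c * (x - l))) < 1)
    by (rewrite <- exp_0; apply exp_increasing; assert (0 < c * (x - l)) by (apply Rmult_lt_0_compat; lra); lra).
  pose proof (exp_pos (- (c * (x - l)))). pose proof (Hge1 (x + 1) ltac:(lra)).
  destruct (IVT_cor (fun y => F y - z0) l (x + 1)) as [y [Hy Hfy]].
  { apply continuity_minus; [apply abs_continuous_continuity; exact HFa | apply continuity_const; intros ? ?; reflexivity]. }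
  { lra. }
  { rewrite Hl0. unfold z0. nra. }
  assert (Hyo : in_open F l y).
  { split; [destruct (Req_dec y l) as [->|]; [rewrite Hl0 in Hfy; unfold z0 in Hfy; lra | lra]|].
    apply below_rF_of_lt1; [exact HFa | unfold z0 in Hfy; lra]. }
  assert (Hyx : y < x).
  { destruct Hyo as [_ [y' [Hy' HFy']]]. destruct (Rlt_le_dec y x) as [|Hxy]; [assumption|].
    pose proof (Hge1 y' ltac:(lra)). lra. }
  pose proof (HFo y Hyo).
  assert (exp (- (c * (x - l))) < exp (- (c * (y - l)))).
  { apply exp_increasing. assert (c * (y - l) < c * (x - l)) by (apply Rmult_lt_compat_l; lra). lra. }
  unfold z0 in Hfy. lra.
Qed.

Lemma exponential_of_linear_hazard F l c : is_cdf F -> abs_continuous F -> is_lF F l -> 0 < c ->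
  (forall x, in_open F l x -> Rfun F x = c * (x - l)) ->
  rF_infinite F /\ forall x, l <= x -> F x = 1 - exp (- (c * (x - l))).
Proof.
  intros HF HFa Hl Hc HR. pose proof (F_at_l F l HF HFa Hl) as Hl0.
  assert (HFo : forall x, in_open F l x -> F x = 1 - exp (- (c * (x - l)))).
  { intros x Hx. pose proof (HR x Hx) as Hr. unfold Rfun in Hr. pose proof (open_lt1 F l x HF Hx).
    assert (1 - F x = exp (- (c * (x - l)))) by (rewrite <- (exp_ln (1 - F x)) by lra; f_equal; lra). lra. }
  pose proof (exponential_below_rF F l c HF HFa Hl0 Hc HFo) as Hbelow.
  split.
  - intros M. pose proof (Rmax_l M l). pose proof (Rmax_r M l).
    destruct (Hbelow (Rmax M l + 1) ltac:(lra)) as [y [Hy1 Hy2]]. exists y. split; [lra | exact Hy2].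
  - intros x Hx. destruct (Req_dec x l) as [->|Hne].
    + rewrite Hl0. replace (- (c * (l - l))) with 0 by ring. rewrite exp_0. ring.
    + apply HFo. split; [lra | apply Hbelow; lra].
Qed.

(* Necessity.  Throughout, k = k0 + 1 and the characterizing identity holds. *)
Section Necessity.

Variables (F h : R -> R) (hd : nat -> R -> R) (k0 : nat) (l : R).
Hypothesis HF : is_cdf F.
Hypothesis HFac : abs_continuous F.
Hypothesis Hh0 : forall x, in_open F l x -> hd O x = h x.
Hypothesis Hhd : forall j x, (j < S k0)%nat -> in_open F l x -> derivable_pt_lim (hd j) x (hd (S j) x).
Hypothesis Hhk : forall x, in_open F l x -> continuity_pt (hd (S k0)) x.
Hypothesis Hid : forall u v, in_open F l u -> in_open F l v -> u < v ->
  forall G, deriv_chain (fun w => u < w /\ in_open F l w) (fun w => (h w - h u) / (w - u)) k0 G ->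
  cond_exp F (hd (S k0)) (S k0) 1 u v (INR (S k0) * G k0 v).

(* A(u, w) = dd_numer_(k-1)(w) / (w - u)^k, the (k-1)-th derivative at w of the divided
   difference based at u. *)
Definition dd_deriv (u w : R) : R := dd_numer hd h u k0 w / (w - u) ^ S k0.

Lemma integral_identity u w : in_open F l u -> in_open F l w -> u < w -> Rfun F u < Rfun F w ->
  RS_integral (fun t => hd (S k0) t * (Rfun F t - Rfun F u) ^ k0) (Rfun F) u w
              (dd_deriv u w * (Rfun F w - Rfun F u) ^ S k0).
Proof.
  intros Hu Hw Huw HRuw.
  pose proof (Hid u w Hu Hw Huw _
    (dd_chain hd h u (S k0) (in_open F l) (fun w => u < w /\ in_open F l w) k0 Hh0 Hhd
       ltac:(lia) ltac:(intros w' [H1 H2]; split; assumption))) as Hc.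
  assert (Hne : Rfun F w - Rfun F u <> 0) by lra.
  assert (HI : INR (S k0) <> 0) by (apply not_0_INR; lia).
  assert (Hpw : (Rfun F w - Rfun F u) ^ S k0 <> 0) by (apply pow_nonzero; exact Hne).
  replace (dd_deriv u w * (Rfun F w - Rfun F u) ^ S k0) with
    ((Rfun F w - Rfun F u) ^ S k0 / INR (S k0) * (INR (S k0) * (dd_numer hd h u k0 w / (w - u) ^ S k0)))
    by (unfold dd_deriv; field; repeat split; try assumption; apply pow_nonzero; lra).
  apply RS_scal with (1 := Hc). intros t. rewrite cond_weight_r1 by exact Hne. field. split; assumption.
Qed.

Lemma identity_expansion u v : l < u -> u < v -> in_open F l v -> Rfun F u < Rfun F v ->
  negligible v (fun y => dd_deriv u y * (Rfun F y - Rfun F u) ^ S k0 - dd_deriv u v * (Rfun F v - Rfun F u) ^ S k0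
                         - hd (S k0) v * (Rfun F v - Rfun F u) ^ k0 * (Rfun F y - Rfun F v))
               (fun y => Rabs (Rfun F y - Rfun F v)).
Proof.
  intros Hlu Huv Hv HRuv.
  assert (Hu : in_open F l u) by (destruct Hv as [_ [y [Hy1 Hy2]]]; split; [exact Hlu | exists y; split; [lra | exact Hy2]]).
  assert (HRc : continuity_pt (Rfun F) v) by (apply Rfun_cont; [exact HFac | apply (open_lt1 F l); assumption]).
  destruct (open_nbhd F l v Hv) as [e1 [He1 E1]].
  destruct (continuity_pt_eps (Rfun F) v HRc ((Rfun F v - Rfun F u) / 2)) as [e2 [He2 E2]]; [lra|].
  set (d0 := Rmin (Rmin e1 e2) (v - u)).
  assert (Hd0 : 0 < d0) by (repeat apply Rmin_pos; lra).
  assert (Hnear : forall w, Rabs (w - v) < d0 -> in_open F l w /\ u < w /\ Rfun F u < Rfun F w).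
  { intros w Hw. pose proof (Rmin_l (Rmin e1 e2) (v - u)) as Hm1. pose proof (Rmin_r (Rmin e1 e2) (v - u)) as Hm2.
    pose proof (Rmin_l e1 e2). pose proof (Rmin_r e1 e2). fold d0 in Hm1, Hm2.
    specialize (E2 w ltac:(lra)). apply Rabs_def2 in E2. apply Rabs_def2 in Hw as Hw'.
    split; [apply E1; lra | split; lra]. }
  apply (RS_primitive_negl (fun t => hd (S k0) t * (Rfun F t - Rfun F u) ^ k0) (Rfun F)
           (fun w => dd_deriv u w * (Rfun F w - Rfun F u) ^ S k0) u v d0 Hd0).
  - intros w Hw. destruct (Hnear w Hw) as [Hwo [Huw HRw]]. split; [exact Huw|].
    apply integral_identity; assumption.
  - intros s t Hs Ht Hst. apply Rfun_mono; [exact HF | exact Hst | apply (open_lt1 F l); [exact HF | apply Hnear; exact Ht]].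
  - apply continuity_pt_mult; [apply Hhk; exact Hv|].
    apply (continuity_pt_comp (fun t => Rfun F t - Rfun F u) (fun z => z ^ k0)); [|apply derivable_continuous_pt, derivable_pt_pow].
    apply continuity_pt_minus; [exact HRc | apply continuity_pt_const; intros ? ?; reflexivity].
Qed.

(* Differentiating the identity in w at w = v: the hazard R is differentiable at v with
   R'(v) = (R v - R u) / (v - u), whenever R u < R v and the k-th derivative of the
   divided difference at v, dd_numer_k(v) / (v - u)^(k+1), does not vanish. *)
Lemma hazard_derivative_is_slope u v : l < u -> u < v -> in_open F l v ->
  Rfun F u < Rfun F v -> dd_numer hd h u (S k0) v <> 0 ->
  derivable_pt_lim (Rfun F) v ((Rfun F v - Rfun F u) / (v - u)).
Proof.
  intros Hlu Huv Hv HRuv HP.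
  assert (HRc : continuity_pt (Rfun F) v) by (apply Rfun_cont; [exact HFac | apply (open_lt1 F l); assumption]).
  set (g := fun t => Rfun F t - Rfun F u).
  assert (Hg : derivable_pt_lim g v (g v / (v - u))).
  { apply (slope_from_product_expansion (dd_deriv u) g v (dd_numer hd h u (S k0) v / (v - u) ^ S (S k0))
             (hd (S k0) v) (v - u) k0).
    - apply dd_quotient_deriv with (S k0); [intros i Hi; apply Hhd; assumption | lia | lra].
    - apply continuity_pt_minus; [exact HRc | apply continuity_pt_const; intros ? ?; reflexivity].
    - assert (g v ^ k0 <> 0) by (apply pow_nonzero; unfold g; lra).
      assert ((v - u) ^ S (S k0) <> 0) by (apply pow_nonzero; lra).
      unfold Rdiv. repeat apply Rmult_integral_contrapositive_currified; try assumption.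
      + apply Rinv_neq_0_compat; assumption.
      + lra.
    - unfold dd_deriv. change (dd_numer hd h u (S k0) v)
        with ((v - u) ^ (S k0) * hd (S k0) v - INR (S k0) * dd_numer hd h u k0 v).
      rewrite <- !tech_pow_Rmult. field. repeat split; try lra; apply pow_nonzero; lra.
    - apply negl_weaken with (fun y => Rabs (Rfun F y - Rfun F v)); [intros y; right; unfold g; f_equal; ring|].
      apply negl_ext with (2 := identity_expansion u v Hlu Huv Hv HRuv). intros y; unfold g; ring. }
  apply derivable_pt_lim_local with (fun y => g y + Rfun F u).
  - replace ((Rfun F v - Rfun F u) / (v - u)) with (g v / (v - u) + 0) by (unfold g; ring).
    apply (derivable_pt_lim_plus g (fct_cte (Rfun F u))); [exact Hg | apply derivable_pt_lim_const].
  - exists 1; split; [lra | intros y _; unfold g; ring].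
Qed.

(* The remaining hypotheses only concern the behaviour near l. *)
Hypothesis Hl : is_lF F l.
Hypothesis Hhc : forall x, in_closed F l x -> continue_in h (in_closed F l) x.
Hypothesis HM : forall v, in_open F l v ->
  forall g, deriv_chain (in_open F l) (fun w => (h w - h l) / (w - l)) (S k0) g -> g (S k0) v <> 0.

(* Near l both side conditions of the previous lemma hold: R u -> 0 < R v, and
   dd_numer_k(u, v) -> dd_numer_k(l, v), which is nonzero by the hypothesis on 0M_k. *)
Lemma hazard_slopes_near_l v : in_open F l v -> exists d, 0 < d /\
  forall u, l < u < l + d -> u < v /\ derivable_pt_lim (Rfun F) v ((Rfun F v - Rfun F u) / (v - u)).
Proof.
  intros Hv. pose proof (F_at_l F l HF HFac Hl) as Hl0.
  assert (HPl : dd_numer hd h l (S k0) v <> 0).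
  { intros HP0. apply (HM v Hv (fun j w => dd_numer hd h l j w / (w - l) ^ (S j))).
    - apply (dd_chain hd h l (S k0) (in_open F l) (in_open F l) (S k0) Hh0 Hhd); [lia|].
      intros w Hw; split; [apply Hw | exact Hw].
    - rewrite HP0. unfold Rdiv; ring. }
  assert (HRv : 0 < Rfun F v)
    by (apply Rfun_pos; [apply (F_pos_right F l HF Hl); apply Hv | apply (open_lt1 F l); assumption]).
  destruct (right_limit_eps _ _ _ (dd_numer_right_limit hd h l v (S k0) (h_right_limit F h l HFac Hl0 Hhc))
              (Rabs (dd_numer hd h l (S k0) v)) ltac:(apply Rabs_pos_lt; exact HPl)) as [d1 [Hd1 D1]].
  destruct (right_limit_eps _ _ _ (Rfun_right_limit F l HF HFac Hl) (Rfun F v) HRv) as [d2 [Hd2 D2]].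
  destruct Hv as [Hlv Hbv].
  exists (Rmin (Rmin d1 d2) (v - l)). split; [repeat apply Rmin_pos; lra|]. intros u Hu.
  pose proof (Rmin_l d1 d2). pose proof (Rmin_r d1 d2).
  pose proof (Rmin_l (Rmin d1 d2) (v - l)). pose proof (Rmin_r (Rmin d1 d2) (v - l)).
  split; [lra|]. apply hazard_derivative_is_slope; [lra | lra | split; assumption | |].
  - specialize (D2 u ltac:(lra)). rewrite Rminus_0_r in D2. apply Rabs_def2 in D2. lra.
  - intros HPu. specialize (D1 u ltac:(lra)). rewrite HPu, Rminus_0_l, Rabs_Ropp in D1. lra.
Qed.

Lemma hazard_linear : exists c, 0 < c /\ forall x, in_open F l x -> Rfun F x = c * (x - l).
Proof.
  assert (Haff : forall v, in_open F l v -> exists d c, 0 < d /\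
            forall u, l < u < l + d -> Rfun F v - Rfun F u = c * (v - u)).
  { intros v Hv. destruct (hazard_slopes_near_l v Hv) as [d [Hd D]].
    destruct (affine_of_slopes (Rfun F) l v d Hd D) as [c Hc]. exists d, c. split; assumption. }
  destruct (open_nonempty F l HF HFac Hl) as [p Hp]. destruct (Haff p Hp) as [dp [c [Hdp Hcp]]].
  assert (Hlin : forall x, in_open F l x -> Rfun F x = c * (x - l)).
  { intros x Hx. destruct (Haff x Hx) as [dx [cx [Hdx Hcx]]].
    rewrite (affine_common_slope (Rfun F) l x p cx c dx dp Hdx Hdp Hcx Hcp) in Hcx.
    exact (affine_right_limit (Rfun F) l x c dx Hdx Hcx (Rfun_right_limit F l HF HFac Hl)). }
  exists c. split; [|exact Hlin].
  assert (HRp : 0 < Rfun F p)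
    by (apply Rfun_pos; [apply (F_pos_right F l HF Hl); apply Hp | apply (open_lt1 F l); assumption]).
  rewrite Hlin in HRp by exact Hp. destruct Hp as [Hlp _]. nra.
Qed.

Lemma exponential_necessary : rF_infinite F /\
  exists c, 0 < c /\ forall x, l <= x -> F x = 1 - exp (- (c * (x - l))).
Proof.
  destruct hazard_linear as [c [Hc Hlin]].
  destruct (exponential_of_linear_hazard F l c HF HFac Hl Hc Hlin) as [Hinf HFx].
  split; [exact Hinf | exists c; split; assumption].
Qed.

End Necessity.

Theorem mainTheorem1 (F h : R -> R) (hd : nat -> R -> R) (n k : nat) (l : R)
  (Hn : (2 <= n)%nat) (Hk1 : (1 <= k)%nat) (Hk2 : (k <= n - 1)%nat)
  (HF : is_cdf F) (HFac : abs_continuous F) (Hl : is_lF F l)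
  (Hhc : forall x, in_closed F l x -> continue_in h (in_closed F l) x)
  (Hhd : deriv_chain (in_open F l) h k hd)
  (Hhk : forall x, in_open F l x -> continuity_pt (hd k) x)
  (HM : forall v, in_open F l v ->
        forall g, deriv_chain (in_open F l) (fun w => (h w - h l) / (w - l)) k g ->
        g k v <> 0) :
  (forall u v, in_open F l u -> in_open F l v -> u < v ->
     forall G, deriv_chain (fun w => u < w /\ in_open F l w)
                           (fun w => (h w - h u) / (w - u)) (k - 1) G ->
     cond_exp F (hd k) k 1 u v (INR k * G (k - 1)%nat v))
  <->
  (rF_infinite F /\
   exists c, 0 < c /\ forall x, l <= x -> F x = 1 - exp (- (c * (x - l)))).
Proof.
  split.
  - intros Hid. destruct k as [|k0]; [lia|]. replace (S k0 - 1)%nat with k0 in Hid by lia.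
    destruct Hhd as [Hh0 Hhd1].
    exact (exponential_necessary F h hd k0 l HF HFac Hh0 Hhd1 Hhk Hid Hl Hhc HM).
  - intros [Hinf [c [Hc HFx]]]. exact (exponential_sufficient F h hd k l c Hk1 Hhd Hhk Hinf Hc HFx).
Qed.
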